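(* Let $\{\Pi_i\}_{i=1}^n$ be a qubit POVM with $\Pi_i=\alpha_i(\mathbb{I}+\hat n_i\cdot\vec\sigma)$, $\alpha_i\ge0$, $\hat n_i$ unit, $\sum_i\alpha_i=1$, $\sum_i\alpha_i\hat n_i=\vec0$, and let $\mathrm{sym}\{\Pi_i\}$ be the $2n$-outcome POVM $\{\tfrac{\alpha_i}{2}(\mathbb{I}+\hat n_i\cdot\vec\sigma),\tfrac{\alpha_i}{2}(\mathbb{I}-\hat n_i\cdot\vec\sigma)\}_{i=1}^n$. Then $$R(\mathrm{sym}\{\Pi_i\})=\min_{\hat c\in\mathbb{R}^3,\ |\hat c|=1}\ \sum_{i=1}^n\alpha_i|\hat c\cdot\hat n_i|.$$
   Context: A POVM $\{\Pi_i\}$ simulates a family $\{M_{a|x}\}$ if $M_{a|x}=\sum_i p(a|x,i)\Pi_i$ with $p(a|x,i)\ge0$, $\sum_a p(a|x,i)=1$. $\mathcal{P}_r$ is the family of two-outcome POVMs $\{\tfrac12(\mathbb{I}\pm r\hat n\cdot\vec\sigma)\}$ over all unit $\hat n\in\mathbb{R}^3$. $R(\{\Pi_i\})$ is the largest $r$ such that $\{\Pi_i\}$ simulates $\mathcal{P}_r$. *)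

From HB Require Import structures.
From mathcomp Require Import all_boot all_order all_algebra.
From mathcomp Require Import complex.
From mathcomp Require Import reals.
Set Implicit Arguments. Unset Strict Implicit. Unset Printing Implicit Defensive.
Import Order.TTheory GRing.Theory Num.Theory.
Local Open Scope ring_scope.

Section Qubit.
Variable R : realType.
Local Notation C := (R[i]).

Definition sigmaX : 'M[C]_2 :=
  \matrix_(i < 2, j < 2) (if i == j then 0 else 1).
Definition sigmaY : 'M[C]_2 :=
  \matrix_(i < 2, j < 2)
    (if i == j then 0 else if (i : nat) == 0%N then - (Complex 0 1) else Complex 0 1).
Definition sigmaZ : 'M[C]_2 :=
  \matrix_(i < 2, j < 2) (if i == j then (if (i : nat) == 0%N then 1 else -1) else 0).

Definition rC (x : R) : C := Complex x 0.

Definition pauli_dot (v : 'rV[R]_3) : 'M[C]_2 :=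
  rC (v 0 0) *: sigmaX + rC (v 0 1) *: sigmaY + rC (v 0 2%:R) *: sigmaZ.

Definition dot3 (u v : 'rV[R]_3) : R := \sum_(j < 3) u 0 j * v 0 j.
Definition is_unit3 (v : 'rV[R]_3) : Prop := dot3 v v = 1.

Definition simulates (I : finType) (X : Type) (A : finType)
  (Pi : I -> 'M[C]_2) (M : X -> A -> 'M[C]_2) : Prop :=
  exists p : X -> A -> I -> R,
    (forall x a i, 0 <= p x a i) /\
    (forall x i, \sum_(a : A) p x a i = 1) /\
    (forall x a, M x a = \sum_(i : I) rC (p x a i) *: Pi i).

(* The family P_r, indexed by unit vectors n and outcomes a in bool
   (true = '+', false = '-'). *)
Definition unitvec := {v : 'rV[R]_3 | dot3 v v == 1}.
Definition Pfam (r : R) : unitvec -> bool -> 'M[C]_2 :=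
  fun n a => rC (1/2) *: (1%:M + rC (if a then r else - r) *: pauli_dot (val n)).

Definition isR (I : finType) (Pi : I -> 'M[C]_2) (r : R) : Prop :=
  simulates Pi (Pfam r) /\ (forall r', simulates Pi (Pfam r') -> r' <= r).

Definition symPOVM (n : nat) (alpha : 'I_n -> R) (nv : 'I_n -> 'rV[R]_3)
  : 'I_n * bool -> 'M[C]_2 :=
  fun ib => rC (alpha ib.1 / 2) *:
    (1%:M + rC (if ib.2 then 1 else -1) *: pauli_dot (nv ib.1)).

End Qubit.

(* Both POVMs involved are written as [a I + v . sigma]; an identity between
   such operators is an identity between the pairs [(a, v)].
   Upper bound: the outcome "+" of P_r in a direction c has Bloch vector
   [r c / 2], while the simulation produces [sum_i alpha_i (p_i+ - p_i-) n_i / 2]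
   with [|p_i+ - p_i-| <= 1]; projecting on c gives
   [r <= sum_i alpha_i |c . n_i|] for every unit c.
   Achievability: [m x] lies in the zonotope [{sum_i alpha_i t_i n_i | t_i in [-1, 1]}]
   for every unit x.  Otherwise the nearest point of the zonotope to [m x]
   leaves a residual W != 0, and the first-order conditions at that minimum
   show that the support function of the zonotope in the direction W/|W|,
   namely [sum_i alpha_i |W/|W| . n_i|], is smaller than m.  The coefficients
   [t_i] define the response functions [p(+/-|x, (i, s)) = (1 +/- s t_i) / 2]. *)

From mathcomp Require Import all_boot all_order all_algebra.
From mathcomp Require Import complex.
From mathcomp Require Import all_classical all_reals all_analysis.
From mathcomp Require Import ring lra.
Set Implicit Arguments. Unset Strict Implicit. Unset Printing Implicit Defensive.
Import Order.TTheory GRing.Theory Num.Theory.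
Import numFieldNormedType.Exports.
Local Open Scope ring_scope.

Section BlochMatrix.
Variable R : realType.
Local Notation C := (R[i]).

Lemma complex_ext (z w : C) :
  complex.Re z = complex.Re w -> complex.Im z = complex.Im w -> z = w.
Proof. by case: z w => a b [c d] /= -> ->. Qed.

(* [a I + v . sigma] *)
Definition bloch_mx (a : R) (v : 'rV[R]_3) : 'M[C]_2 :=
  \matrix_(i < 2, j < 2)
   match nat_of_ord i, nat_of_ord j with
   | 0%N, 0%N => Complex (a + v 0 2%:R) 0
   | 0%N, _ => Complex (v 0 0) (- v 0 1)
   | _, 0%N => Complex (v 0 0) (v 0 1)
   | _, _ => Complex (a - v 0 2%:R) 0
   end.

Lemma bloch_mx_inj a v b w : bloch_mx a v = bloch_mx b w -> a = b /\ v = w.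
Proof.
move/matrixP => eq_vw; have ord1 : (1 < 2)%N by [].
move: (eq_vw ord0 ord0) (eq_vw ord0 (Ordinal ord1)).
move: (eq_vw (Ordinal ord1) ord0) (eq_vw (Ordinal ord1) (Ordinal ord1)).
rewrite !mxE /= => -[e10 e10'] [e11] [e00] [e01 e01'].
have eq_z : v 0 2%:R = w 0 2%:R by lra.
split; first lra.
apply/rowP => -[[|[|[|k]]] lt_k3] //=.
- by rewrite (_ : Ordinal lt_k3 = 0) //; apply: val_inj.
- by rewrite (_ : Ordinal lt_k3 = 1) //; apply: val_inj.
- by rewrite (_ : Ordinal lt_k3 = 2%:R) //; apply: val_inj.
Qed.

Ltac entrywise :=
  apply/matrixP; case=> [[|[|?]] ?]; case=> [[|[|?]] ?];
  rewrite ?mxE //=; apply: complex_ext => /=.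

Lemma scale_bloch_mx p a v : rC p *: bloch_mx a v = bloch_mx (p * a) (p *: v).
Proof. by entrywise; rewrite ?mxE /rC /=; ring. Qed.

Lemma add_bloch_mx a v b w : bloch_mx a v + bloch_mx b w = bloch_mx (a + b) (v + w).
Proof. by entrywise; rewrite ?mxE; ring. Qed.

Lemma sum_bloch_mx (I : Type) (r : seq I) (a : I -> R) (v : I -> 'rV[R]_3) :
  \sum_(k <- r) bloch_mx (a k) (v k) = bloch_mx (\sum_(k <- r) a k) (\sum_(k <- r) v k).
Proof.
elim: r => [|x r IH]; last by rewrite !big_cons IH add_bloch_mx.
by rewrite !big_nil; entrywise; rewrite ?mxE; ring.
Qed.

Lemma pauli_dotE v : pauli_dot v = bloch_mx 0 v.
Proof. by rewrite /pauli_dot; entrywise; rewrite /sigmaX /sigmaY /sigmaZ ?mxE /=; ring. Qed.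

Lemma scalar_mx1E : (1%:M : 'M[C]_2) = bloch_mx 1 0.
Proof. by entrywise; rewrite ?mxE /=; ring. Qed.

Lemma PfamE r (x : unitvec R) b :
  Pfam r x b = bloch_mx (1 / 2) (((if b then r else - r) / 2) *: val x).
Proof.
rewrite /Pfam pauli_dotE scalar_mx1E !scale_bloch_mx add_bloch_mx scale_bloch_mx.
by rewrite mulr0 addr0 mulr1 scalerDr scaler0 add0r scalerA mul1r mulrC.
Qed.

Lemma symPOVME n (alpha : 'I_n -> R) (nv : 'I_n -> 'rV[R]_3) i s :
  symPOVM alpha nv (i, s) =
  bloch_mx (alpha i / 2) ((alpha i / 2 * (if s then 1 else -1)) *: nv i).
Proof.
rewrite /symPOVM pauli_dotE scalar_mx1E !scale_bloch_mx add_bloch_mx scale_bloch_mx.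
by rewrite mulr0 addr0 mulr1 scalerDr scaler0 add0r scalerA.
Qed.

Lemma sum_symPOVM n (alpha : 'I_n -> R) (nv : 'I_n -> 'rV[R]_3)
    (q : 'I_n * bool -> R) :
  \sum_(k : 'I_n * bool) rC (q k) *: symPOVM alpha nv k =
  bloch_mx (\sum_(i < n) alpha i / 2 * (q (i, true) + q (i, false)))
    (\sum_(i < n) (alpha i / 2 * (q (i, true) - q (i, false))) *: nv i).
Proof.
rewrite (eq_bigr (fun k => rC (q (k.1, k.2)) *: symPOVM alpha nv (k.1, k.2)));
  last by case.
rewrite -(pair_bigA _ (fun i b => rC (q (i, b)) *: symPOVM alpha nv (i, b))) /=.
under eq_bigr => i _ do rewrite big_bool /= !symPOVME !scale_bloch_mx add_bloch_mx.
rewrite sum_bloch_mx; congr bloch_mx; apply: eq_bigr => i _; first by ring.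
by rewrite !scalerA -scalerDl; congr (_ *: _); ring.
Qed.

End BlochMatrix.

Section Dot3.
Variable R : realType.
Implicit Types u v w : 'rV[R]_3.

Lemma dot3C u v : dot3 u v = dot3 v u.
Proof. by apply: eq_bigr => j _; rewrite mulrC. Qed.

Lemma dot3Dr u v w : dot3 u (v + w) = dot3 u v + dot3 u w.
Proof. by rewrite /dot3 -big_split; apply: eq_bigr => j _; rewrite mxE mulrDr. Qed.

Lemma dot3Zr u a v : dot3 u (a *: v) = a * dot3 u v.
Proof. by rewrite /dot3 mulr_sumr; apply: eq_bigr => j _; rewrite mxE mulrCA. Qed.

Lemma dot3Br u v w : dot3 u (v - w) = dot3 u v - dot3 u w.
Proof. by rewrite dot3Dr -scaleN1r dot3Zr mulN1r. Qed.

Lemma dot3Zl u a v : dot3 (a *: v) u = a * dot3 v u.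
Proof. by rewrite dot3C dot3Zr dot3C. Qed.

Lemma dot3Bl u v w : dot3 (v - w) u = dot3 v u - dot3 w u.
Proof. by rewrite dot3C dot3Br !(dot3C u). Qed.

Lemma dot3_sumr (I : Type) (r : seq I) u (F : I -> 'rV[R]_3) :
  dot3 u (\sum_(i <- r) F i) = \sum_(i <- r) dot3 u (F i).
Proof.
apply: (big_morph (dot3 u) (dot3Dr u)).
by rewrite /dot3 big1 // => j _; rewrite mxE mulr0.
Qed.

Lemma dot3_ge0 v : 0 <= dot3 v v.
Proof. by apply: sumr_ge0 => j _; rewrite -expr2 sqr_ge0. Qed.

Lemma dot3_eq0 v : dot3 v v = 0 -> v = 0.
Proof.
move=> /eqP; rewrite psumr_eq0 => [/allP v0|j _]; last by rewrite -expr2 sqr_ge0.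
apply/rowP => j; rewrite mxE; have := v0 j (mem_index_enum _).
by rewrite -expr2 sqrf_eq0 => /eqP.
Qed.

Lemma dot3_sqr_le u x : dot3 x x = 1 -> dot3 u x ^+ 2 <= dot3 u u.
Proof.
move=> x1; have := dot3_ge0 (u - dot3 u x *: x).
by rewrite dot3Br !dot3Bl !dot3Zr !dot3Zl x1 (dot3C x u); nra.
Qed.

End Dot3.

Section QuadraticOnInterval.
Variable R : realType.
Variables (t g a : R).
Hypotheses (t_box : -1 <= t <= 1) (a_ge0 : 0 <= a).
Hypothesis t_min : forall s, -1 <= s <= 1 -> 0 <= (s - t) ^+ 2 * a - 2 * (s - t) * g.

Lemma quadratic_min_endpoint : 0 < g -> t = 1.
Proof.
move=> g_gt0; have [//|t_neq1] := eqVneq t 1.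
have /andP [t_ge t_le] := t_box.
have d_gt0 : 0 < 1 - t by rewrite subr_gt0 lt_neqAle t_neq1.
set d := 1 - t in d_gt0.
have gda_gt0 : 0 < g + d * a by rewrite ltr_wpDr // mulr_ge0 // ltW.
(* The step [e] lies in (0, d] and makes the linear term dominate. *)
set e := d * g / (g + d * a).
have e_gt0 : 0 < e by rewrite divr_gt0 // mulr_gt0.
have e_eq : e * (g + d * a) = d * g by rewrite /e divfK // gt_eqF.
have e_le : e <= d.
  by have := mulr_ge0 (mulr_ge0 (ltW e_gt0) (ltW d_gt0)) a_ge0; nra.
have := @t_min (t + e); rewrite addrAC subrr add0r.
have -> : (-1 <= t + e <= 1) = true by apply/andP; split; rewrite /d in e_le; lra.
move=> /(_ isT) quad_ge0.
have := mulr_ge0 (ltW d_gt0) quad_ge0.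
have := mulr_gt0 (mulr_gt0 d_gt0 e_gt0) g_gt0.
have := mulr_gt0 (mulr_gt0 e_gt0 e_gt0) g_gt0.
have : e * (e * (g + d * a)) = e * (d * g) by rewrite e_eq.
nra.
Qed.

End QuadraticOnInterval.

Lemma quadratic_min_mul_norm (R : realType) (t g a : R) :
  -1 <= t <= 1 -> 0 <= a ->
  (forall s, -1 <= s <= 1 -> 0 <= (s - t) ^+ 2 * a - 2 * (s - t) * g) ->
  t * g = `|g|.
Proof.
move=> t_box a_ge0 t_min.
have [g_lt0|g_gt0|->] := ltgtP g 0; last by rewrite mulr0 normr0.
- have Nt_box : -1 <= - t <= 1 by move/andP: t_box => [? ?]; apply/andP; split; lra.
  suff Nt1 : - t = 1 by rewrite ltr0_norm // -mulrNN Nt1 mul1r.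
  apply: (@quadratic_min_endpoint _ (- t) (- g) a Nt_box a_ge0); last by rewrite oppr_gt0.
  move=> s s_box.
  have Ns_box : -1 <= - s <= 1 by move/andP: s_box => [? ?]; apply/andP; split; lra.
  by have := t_min _ Ns_box; congr (_ <= _); ring.
- by rewrite (quadratic_min_endpoint t_box a_ge0 t_min g_gt0) mul1r gtr0_norm.
Qed.

Section Continuity.
Local Open Scope classical_set_scope.
Variable R : realType.

Lemma box_EVT_min n (f : 'rV[R]_n -> R) : continuous f ->
  exists2 t : 'rV[R]_n, (forall i, -1 <= t 0 i <= 1) &
    forall t' : 'rV[R]_n, (forall i, -1 <= t' 0 i <= 1) -> f t <= f t'.
Proof.
move=> f_cont.
pose box := [set v : 'rV[R]_n | forall i, `[(-1 : R), 1]%classic (v ord0 i)].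
have box_compact : compact box.
  by apply: (@rV_compact _ _ (fun=> `[(-1 : R), 1]%classic)) => i; exact: segment_compact.
have box0 : box !=set0 by exists 0 => i /=; rewrite mxE in_itv /= lerN10 ler01.
have [t t_box t_min] := EVT_min_rV box0 box_compact (continuous_subspaceT f_cont).
exists t => [i|t' t'_box]; first by move: t_box; rewrite inE => /(_ i); rewrite /= in_itv.
by apply: t_min; rewrite inE => i /=; rewrite in_itv /=; exact: t'_box.
Qed.

Lemma continuous_mulf (T : topologicalType) (f g : T -> R) :
  continuous f -> continuous g -> continuous (fun t => f t * g t).
Proof. by move=> f_cont g_cont t; exact: (continuousM (f_cont t) (g_cont t)). Qed.

Lemma continuous_subf (T : topologicalType) (f g : T -> R) :
  continuous f -> continuous g -> continuous (fun t => f t - g t).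
Proof. by move=> f_cont g_cont t; exact: (continuousB (f_cont t) (g_cont t)). Qed.

Lemma continuous_sum (T : topologicalType) (I : Type) (r : seq I) (G : I -> T -> R) :
  (forall i, continuous (G i)) -> continuous (fun t => \sum_(i <- r) G i t).
Proof.
move=> G_cont; elim: r => [|a r IH].
  rewrite (_ : (fun t => _) = fun=> 0); first exact: cst_continuous.
  by apply/funext => t; rewrite big_nil.
rewrite (_ : (fun t => _) = G a + fun t => \sum_(i <- r) G i t).
  by move=> x; apply: continuousD; [exact: G_cont | exact: IH].
by apply/funext => t; rewrite big_cons.
Qed.

End Continuity.

Section Zonotope.
Variable R : realType.
Variables (n : nat) (alpha : 'I_n -> R) (nv : 'I_n -> 'rV[R]_3).
Hypothesis alpha_ge0 : forall i, 0 <= alpha i.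
Hypothesis nv_unit : forall i, is_unit3 (nv i).
Variables (m : R) (x : 'rV[R]_3).

Definition zono_residual (t : 'rV[R]_n) : 'rV[R]_3 :=
  m *: x - \sum_(i < n) (alpha i * t 0 i) *: nv i.

Lemma continuous_residual_sqnorm :
  continuous (fun t => dot3 (zono_residual t) (zono_residual t)).
Proof.
pose coord (t : 'rV[R]_n) (j : 'I_3) :=
  m * x 0 j - \sum_(i < n) alpha i * t 0 i * nv i 0 j.
have coordE t j : zono_residual t 0 j = coord t j.
  by rewrite !mxE summxE; congr (_ - _); apply: eq_bigr => i _; rewrite mxE.
rewrite (_ : (fun t => _) = fun t => \sum_(j < 3) coord t j * coord t j); last first.
  by apply/funext => t; apply: eq_bigr => j _; rewrite coordE.
have coord_cont j : continuous (coord ^~ j).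
  apply: continuous_subf; first exact: cst_continuous.
  apply: continuous_sum => i; apply: continuous_mulf; last exact: cst_continuous.
  by apply: continuous_mulf; [exact: cst_continuous | exact: coord_continuous].
by apply: continuous_sum => j; apply: continuous_mulf; exact: coord_cont.
Qed.

Lemma zono_residual_shift (t : 'rV[R]_n) i c :
  zono_residual (t + c *: delta_mx 0 i) = zono_residual t - (c * alpha i) *: nv i.
Proof.
rewrite /zono_residual -addrA -opprD; congr (_ - _).
under eq_bigr => k _ do rewrite !mxE mulrDr scalerDl.
rewrite big_split /=; congr (_ + _).
rewrite (bigD1 i) //= big1 ?addr0 => [|k /negbTE ki]; last first.
  by rewrite ki mulr0 mulr0 scale0r.
by rewrite eqxx mulr1 mulrC.
Qed.

Lemma residual_min_coord (t : 'rV[R]_n) :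
  (forall i, -1 <= t 0 i <= 1) ->
  (forall t' : 'rV[R]_n, (forall i, -1 <= t' 0 i <= 1) ->
     dot3 (zono_residual t) (zono_residual t) <=
     dot3 (zono_residual t') (zono_residual t')) ->
  forall i, t 0 i * (alpha i * dot3 (zono_residual t) (nv i)) =
            alpha i * `|dot3 (zono_residual t) (nv i)|.
Proof.
move=> t_box t_min i; set W := zono_residual t.
rewrite -[alpha i in RHS]ger0_norm // -normrM.
apply: (@quadratic_min_mul_norm _ _ _ (alpha i ^+ 2) (t_box i) (sqr_ge0 _)).
move=> s s_box.
have shift_box k : -1 <= (t + (s - t 0 i) *: delta_mx 0 i) 0 k <= 1.
  rewrite !mxE; have [->|ki] := eqVneq k i; first by rewrite !eqxx mulr1 addrC subrK.
  by rewrite andbF mulr0 addr0; exact: t_box.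
have := t_min _ shift_box; rewrite zono_residual_shift -/W; clearbody W.
rewrite dot3Br !dot3Bl !dot3Zr !dot3Zl (dot3C (nv i) W) [dot3 (nv i) _]nv_unit.
by rewrite -subr_ge0; congr (_ <= _); ring.
Qed.

Hypothesis m_ge0 : 0 <= m.
Hypothesis m_lower :
  forall c, is_unit3 c -> m <= \sum_(i < n) alpha i * `|dot3 c (nv i)|.
Hypothesis x_unit : is_unit3 x.

Lemma zonotope_mem_scaled_unit : exists t : 'I_n -> R,
  (forall i, -1 <= t i <= 1) /\ \sum_(i < n) (alpha i * t i) *: nv i = m *: x.
Proof.
have [t t_box t_min] := box_EVT_min continuous_residual_sqnorm.
have t_coord := residual_min_coord t_box t_min.
set W := zono_residual t in t_coord.
set S := \sum_(i < n) alpha i * `|dot3 W (nv i)|.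
have S_ge0 : 0 <= S by apply: sumr_ge0 => i _; apply: mulr_ge0.
have W_sqnorm : dot3 W W = m * dot3 W x - S.
  rewrite {2}/W /zono_residual dot3Br dot3Zr dot3_sumr; congr (_ - _).
  by apply: eq_bigr => i _; rewrite dot3Zr -t_coord; ring.
have [/dot3_eq0 W0|W_neq0] := eqVneq (dot3 W W) 0.
  exists (t 0); split; first exact: t_box.
  by apply/eqP; rewrite eq_sym -subr_eq0 -/(zono_residual t) -/W W0.
exfalso; set N := Num.sqrt (dot3 W W).
have N_gt0 : 0 < N by rewrite sqrtr_gt0 lt0r W_neq0 dot3_ge0.
have N2 : N ^+ 2 = dot3 W W by rewrite sqr_sqrtr // dot3_ge0.
have unit_W : is_unit3 (N^-1 *: W).
  by rewrite /is_unit3 dot3Zr dot3Zl -N2; field; rewrite gt_eqF.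
have := m_lower unit_W.
rewrite (_ : \sum_(i < n) _ = N^-1 * S); last first.
  rewrite mulr_sumr; apply: eq_bigr => i _.
  by rewrite dot3Zl normrM gtr0_norm ?invr_gt0 // mulrCA.
rewrite ler_pdivlMl // => mN_le_S.
have Wx_le_N : dot3 W x <= N by have := dot3_sqr_le W x_unit; nra.
by have := ler_wpM2l m_ge0 Wx_le_N; nra.
Qed.

End Zonotope.

Lemma simulates_Pfam_le_support (R : realType) n (alpha : 'I_n -> R)
    (nv : 'I_n -> 'rV[R]_3) (r : R) (c : 'rV[R]_3) :
  (forall i, 0 <= alpha i) -> is_unit3 c ->
  simulates (symPOVM alpha nv) (Pfam r) ->
  r <= \sum_(i < n) alpha i * `|dot3 c (nv i)|.
Proof.
move=> alpha_ge0 c_unit [p [p_ge0 [p_sum1 p_eq]]].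
pose u : unitvec R := exist _ c (introT eqP c_unit).
move: (p_eq u true); rewrite PfamE sum_symPOVM => /bloch_mx_inj[_].
move=> /(congr1 (dot3 c)); rewrite dot3Zr /= c_unit dot3_sumr mulr1 => r_eq.
suff : r / 2 <= (\sum_(i < n) alpha i * `|dot3 c (nv i)|) / 2 by lra.
rewrite r_eq mulr_suml; apply: ler_sum => i _; rewrite dot3Zr.
set dl := p u true (i, true) - p u true (i, false).
have : p u true (i, true) + p u false (i, true) = 1 by rewrite -(p_sum1 u (i, true)) big_bool.
have : p u true (i, false) + p u false (i, false) = 1 by rewrite -(p_sum1 u (i, false)) big_bool.
have := p_ge0 u false (i, true); have := p_ge0 u false (i, false).
have := p_ge0 u true (i, true); have := p_ge0 u true (i, false).
move=> ? ? ? ? ? ?; have dl_le1 : `|dl| <= 1 by rewrite ler_norml /dl; lra.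
have dl_d : dl * dot3 c (nv i) <= `|dot3 c (nv i)|.
  by rewrite (le_trans (ler_norm _)) // normrM ler_piMl.
by have := ler_wpM2l (alpha_ge0 i) dl_d; nra.
Qed.

Lemma sym_simulates_Pfam (R : realType) n (alpha : 'I_n -> R)
    (nv : 'I_n -> 'rV[R]_3) (r : R) :
  \sum_(i < n) alpha i = 1 ->
  (forall x : unitvec R, exists t : 'I_n -> R,
     (forall i, -1 <= t i <= 1) /\ \sum_(i < n) (alpha i * t i) *: nv i = r *: val x) ->
  simulates (symPOVM alpha nv) (Pfam r).
Proof.
move=> alpha_sum /choice[T T_spec].
pose sg (b : bool) : R := if b then 1 else -1.
exists (fun x a k => (1 + sg a * sg k.2 * T x k.1) / 2); split; [|split].
- move=> x a [i s] /=; have /andP[? ?] := (T_spec x).1 i.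
  by apply: divr_ge0 => //; case: a; case: s; rewrite /sg; lra.
- by move=> x [i s]; rewrite big_bool /sg /=; case: s; lra.
move=> x a; rewrite PfamE sum_symPOVM; congr bloch_mx.
  rewrite (_ : (1 / 2 : R) = \sum_(i < n) alpha i * (1 / 2)); last first.
    by rewrite -mulr_suml alpha_sum [RHS]mul1r.
  apply: eq_bigr => i _.
  by rewrite /sg; case: a => /=; field.
rewrite (eq_bigr (fun i => (sg a / 2) *: ((alpha i * T x i) *: nv i))).
  by rewrite -scaler_sumr (T_spec x).2 scalerA /sg; case: a => /=; congr (_ *: _); field.
by move=> i _; rewrite scalerA /sg; case: a => /=; congr (_ *: _); field.
Qed.

Theorem mainTheorem15 (R : realType) (n : nat)
  (alpha : 'I_n -> R) (nv : 'I_n -> 'rV[R]_3)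
  (alpha_ge0 : forall i, 0 <= alpha i)
  (nv_unit : forall i, is_unit3 (nv i))
  (alpha_sum : \sum_(i < n) alpha i = 1)
  (alpha_nv_sum : \sum_(i < n) alpha i *: nv i = 0)
  (m : R)
  (m_attained : exists c : 'rV[R]_3,
      is_unit3 c /\ m = \sum_(i < n) alpha i * `|dot3 c (nv i)|)
  (m_lower : forall c : 'rV[R]_3,
      is_unit3 c -> m <= \sum_(i < n) alpha i * `|dot3 c (nv i)|) :
  isR (symPOVM alpha nv) m.
Proof.
have [c [c_unit m_eq]] := m_attained.
have m_ge0 : 0 <= m by rewrite m_eq; apply: sumr_ge0 => i _; apply: mulr_ge0.
split=> [|r sim_r]; last first.
  by rewrite m_eq; exact: (simulates_Pfam_le_support alpha_ge0 c_unit sim_r).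
apply: sym_simulates_Pfam => // -[x x_unit] /=.
by apply: zonotope_mem_scaled_unit => //; exact/eqP.
Qed.
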